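(* Let $C=(c_{xy})\in\mathrm{Cor}(n,m)$ and let $u_1,\dots,u_n,v_1,\dots,v_m$ be unit vectors in $\mathbb{R}^{n+m}$ with $c_{xy}=\langle u_x,v_y\rangle$ for all $x,y$. Define $\ell^x_a:=\frac12(1,a\,u_x)\in\mathbb{R}^{n+m+1}$ for $x\in[n]$, $a\in\{\pm1\}$, and $\tilde\ell^y_b:=\frac12(1,b\,v_y)$ for $y\in[m]$, $b\in\{\pm1\}$. Then $p_C(ab|xy)=\langle\ell^x_a,\tilde\ell^y_b\rangle$ for all $a,b,x,y$, and the behavior $\mathbf{p}_C$ is a Gram-Lorentz behavior.
   Context: $\mathrm{Cor}(n,m)$ is the set of matrices $C=(c_{xy})\in[-1,1]^{n\times m}$ for which there exist $d\ge1$, Hermitian $d\times d$ matrices $M_1,\dots,M_n,N_1,\dots,N_m$ with eigenvalues in $[-1,1]$ and a Hermitian psd trace-one matrix $\rho$ on $\mathbb{C}^d\otimes\mathbb{C}^d$ with $c_{xy}=\mathrm{Tr}((M_x\otimes N_y)\rho)$ for all $x,y$. (Equivalently, by Tsirelson's theorem, such unit vectors $u_x,v_y$ exist.) For $C\in\mathrm{Cor}(n,m)$, $\mathbf{p}_C$ is the behavior in the $(n,m,2,2)$-scenario with outcomes $a,b\in\{\pm1\}$ given by $p_C(ab|xy)=\frac{1+ab\,c_{xy}}{4}$; it is a quantum behavior. For a behavior $\mathbf{p}$ in an $(m_A,m_B,o_A,o_B)$-scenario let $N:=m_Ao_A+m_Bo_B$ and let $\mathcal{A}(\mathbf{p})$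 be the set of real symmetric $N\times N$ matrices $R$ indexed by $([m_A]\times[o_A])\cup([m_B]\times[o_B])$ with $\sum_{a,a'}R_{xa,x'a'}=1$ for all $x,x'$, $\sum_{a,b}R_{xa,yb}=1$ for all $x,y$, $\sum_{b,b'}R_{yb,y'b'}=1$ for all $y,y'$, and $R_{xa,yb}=p(ab|xy)$ for all $a,b,x,y$. With the Lorentz cone $\mathcal{L}_k:=\{(c,x)\in\mathbb{R}\times\mathbb{R}^{k-1}:c\ge\|x\|\}$, a matrix is Gram-Lorentz if it is the Gram matrix of vectors in some $\mathcal{L}_k$; a quantum behavior $\mathbf{p}$ is Gram-Lorentz if some Gram-Lorentz matrix lies in $\mathcal{A}(\mathbf{p})$. *)

From HB Require Import structures.
From mathcomp Require Import all_boot all_order all_algebra.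
From mathcomp Require Import complex mxtens.
Set Implicit Arguments.
Unset Strict Implicit.
Unset Printing Implicit Defensive.
Import Order.TTheory GRing.Theory Num.Theory.
Local Open Scope ring_scope.

Section Defs.
Variable R : rcfType.
Local Notation C := R[i].

Definition dotr (k : nat) (u v : 'rV[R]_k) : R := \sum_(i < k) u 0 i * v 0 i.

(* outcome bool encodes {+1,-1}: true = +1, false = -1 *)
Definition sgnb (a : bool) : R := if a then 1 else -1.

Definition adjmx (k : nat) (A : 'M[C]_k) : 'M[C]_k := map_mx Num.conj A^T.

Definition hermitian (k : nat) (A : 'M[C]_k) : Prop := adjmx A = A.

Definition psd (k : nat) (A : 'M[C]_k) : Prop :=
  hermitian A /\ forall w : 'rV[C]_k, 0 <= (w *m A *m map_mx Num.conj w^T) 0 0.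

Definition obs_pm1 (k : nat) (A : 'M[C]_k) : Prop :=
  hermitian A /\ forall l : C, eigenvalue A l -> -1 <= l <= 1.

Definition density (d : nat) (rho : 'M[C]_(d * d)) : Prop :=
  psd rho /\ \tr rho = 1.

Definition Cor (n m : nat) (c : 'M[R]_(n, m)) : Prop :=
  (forall x y, -1 <= c x y <= 1) /\
  exists (d : nat) (M : 'I_n -> 'M[C]_d) (N : 'I_m -> 'M[C]_d)
         (rho : 'M[C]_(d * d)),
    (0 < d)%N /\ (forall x, obs_pm1 (M x)) /\ (forall y, obs_pm1 (N y)) /\
    density rho /\
    forall x y, real_complex R (c x y) = \tr (tensmx (M x) (N y) *m rho).

(* A behavior in an (mA, mB, |OA|, |OB|)-scenario: p a b x y = p(ab|xy). *)
Definition behavior (mA mB : nat) (OA OB : finType) :=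
  OA -> OB -> 'I_mA -> 'I_mB -> R.

Definition pC (n m : nat) (c : 'M[R]_(n, m)) : behavior n m bool bool :=
  fun a b x y => (1 + sgnb a * sgnb b * c x y) / 4.

Definition quantum (mA mB : nat) (OA OB : finType) (p : behavior mA mB OA OB)
  : Prop :=
  exists (d : nat) (E : 'I_mA -> OA -> 'M[C]_d) (F : 'I_mB -> OB -> 'M[C]_d)
         (rho : 'M[C]_(d * d)),
    (0 < d)%N /\ density rho /\
    (forall x a, psd (E x a)) /\ (forall x, \sum_a E x a = 1%:M) /\
    (forall y b, psd (F y b)) /\ (forall y, \sum_b F y b = 1%:M) /\
    forall a b x y,
      real_complex R (p a b x y) = \tr (tensmx (E x a) (F y b) *m rho).

Definition bidx (mA mB : nat) (OA OB : finType) : finType :=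
  ('I_mA * OA + 'I_mB * OB)%type.

Definition inA (mA mB : nat) (OA OB : finType) (p : behavior mA mB OA OB)
  (Q : bidx mA mB OA OB -> bidx mA mB OA OB -> R) : Prop :=
  (forall i j, Q i j = Q j i) /\
  (forall x x', \sum_a \sum_a' Q (inl (x, a)) (inl (x', a')) = 1) /\
  (forall x y, \sum_a \sum_b Q (inl (x, a)) (inr (y, b)) = 1) /\
  (forall y y', \sum_b \sum_b' Q (inr (y, b)) (inr (y', b')) = 1) /\
  (forall a b x y, Q (inl (x, a)) (inr (y, b)) = p a b x y).

Definition lorentz (k : nat) (w : 'rV[R]_(1 + k)) : Prop :=
  Num.sqrt (dotr (rsubmx w) (rsubmx w)) <= lsubmx w 0 0.

Definition gram_lorentz (I : finType) (Q : I -> I -> R) : Prop :=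
  exists (k : nat) (w : I -> 'rV[R]_(1 + k)),
    (forall i, lorentz (w i)) /\ forall i j, Q i j = dotr (w i) (w j).

Definition gram_lorentz_behavior (mA mB : nat) (OA OB : finType)
  (p : behavior mA mB OA OB) : Prop :=
  quantum p /\ exists Q, inA p Q /\ gram_lorentz Q.

Definition ellv (k : nat) (u : 'rV[R]_k) (a : bool) : 'rV[R]_(1 + k) :=
  2^-1 *: row_mx (const_mx 1) (sgnb a *: u).

End Defs.

From Pilot Require Import Defs.
From HB Require Import structures.
From mathcomp Require Import all_boot all_order all_algebra.
From mathcomp Require Import complex mxtens.
From mathcomp Require Import ring.

(* The identity for p_C is a direct computation,
   <l^x_a, l~^y_b> = (1 + ab <u_x, v_y>) / 4, and every l^x_a lies in the
   Lorentz cone because its first coordinate 1/2 is the norm of a u_x / 2.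
   Summing these inner products over the four sign pairs always gives 1,
   so their Gram matrix lies in A(p_C).

   That p_C is quantum comes from a realisation (M_x, N_y, rho) of C. The
   effects (1 + a M_x) / 2 and (1 + b N_y) / 2 reproduce (1 + ab c_xy) / 4
   only up to the marginal terms a Tr((M_x (x) 1) rho) and
   b Tr((1 (x) N_y) rho). Doubling each local space, taking the block
   diagonal effects diag((1 + a M_x) / 2, (1 - a M_x) / 2), and spreading
   rho evenly over the (+,+) and (-,-) blocks flips the sign of both
   marginals in the second block, so they cancel. *)

Set Implicit Arguments.
Unset Strict Implicit.
Unset Printing Implicit Defensive.

Import Order.TTheory GRing.Theory Num.Theory.
Local Open Scope ring_scope.
Local Open Scope sesquilinear_scope.

Section LorentzGram.
Variable R : rcfType.
Implicit Types (k : nat) (a b : bool).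

Lemma dotrC k (u v : 'rV[R]_k) : dotr u v = dotr v u.
Proof. by apply: eq_bigr => i _; rewrite mulrC. Qed.

Lemma dotrZl k (r : R) (u v : 'rV[R]_k) : dotr (r *: u) v = r * dotr u v.
Proof.
by rewrite /dotr mulr_sumr; apply: eq_bigr => i _; rewrite mxE mulrA.
Qed.

Lemma dotrZr k (r : R) (u v : 'rV[R]_k) : dotr u (r *: v) = r * dotr u v.
Proof. by rewrite dotrC dotrZl dotrC. Qed.

Lemma dotr_row_mx k l (u1 v1 : 'rV[R]_k) (u2 v2 : 'rV[R]_l) :
  dotr (row_mx u1 u2) (row_mx v1 v2) = dotr u1 v1 + dotr u2 v2.
Proof.
by rewrite /dotr big_split_ord; congr (_ + _); apply: eq_bigr => i _;
  rewrite ?row_mxEl ?row_mxEr.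
Qed.

Lemma sgnbN a : sgnb R (~~ a) = - sgnb R a.
Proof. by case: a; rewrite /sgnb ?opprK. Qed.

Lemma sgnb_sqr a : sgnb R a ^+ 2 = 1.
Proof. by case: a; rewrite /sgnb ?expr1n ?sqrrN ?expr1n. Qed.

Lemma dotr_ellv k (u v : 'rV[R]_k) a b :
  dotr (ellv u a) (ellv v b) = (1 + sgnb R a * sgnb R b * dotr u v) / 4.
Proof.
rewrite dotrZl dotrZr dotr_row_mx dotrZl dotrZr /dotr big_ord1 !mxE.
by field.
Qed.

Lemma lorentz_ellv k (u : 'rV[R]_k) a : dotr u u = 1 -> lorentz (ellv u a).
Proof.
move=> u1; rewrite /lorentz /ellv !linearZ /= row_mxKl row_mxKr !mxE.
rewrite dotrZl dotrZr !dotrZl !dotrZr u1 mulr1 mulrCA -expr2 sgnb_sqr mulr1.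
by rewrite -expr2 sqrtr_sqr ger0_norm // invr_ge0 ler0n.
Qed.

Lemma sum_dotr_ellv k (u v : 'rV[R]_k) :
  \sum_a \sum_b dotr (ellv u a) (ellv v b) = 1.
Proof. by rewrite !big_bool /= !dotr_ellv /sgnb; field. Qed.

Lemma pC_ellv n m (c : 'M[R]_(n, m)) k (u : 'I_n -> 'rV[R]_k)
    (v : 'I_m -> 'rV[R]_k) :
  (forall x y, c x y = dotr (u x) (v y)) ->
  forall a b x y, pC c a b x y = dotr (ellv (u x) a) (ellv (v y) b).
Proof. by move=> cuv a b x y; rewrite dotr_ellv -cuv. Qed.

End LorentzGram.

Section LorentzFamily.
Variables (R : rcfType) (n m k : nat).
Variables (u : 'I_n -> 'rV[R]_k) (v : 'I_m -> 'rV[R]_k).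

Definition ellv_bidx (i : bidx n m bool bool) : 'rV[R]_(1 + k) :=
  match i with inl (x, a) => ellv (u x) a | inr (y, b) => ellv (v y) b end.

Definition gram_ellv (i j : bidx n m bool bool) : R :=
  dotr (ellv_bidx i) (ellv_bidx j).

Lemma gram_lorentz_ellv :
  (forall x, dotr (u x) (u x) = 1) -> (forall y, dotr (v y) (v y) = 1) ->
  gram_lorentz gram_ellv.
Proof.
by move=> u1 v1; exists k, ellv_bidx; split=> // -[[x a]|[y b]];
  apply: lorentz_ellv.
Qed.

Lemma inA_gram_ellv (c : 'M[R]_(n, m)) :
  (forall x y, c x y = dotr (u x) (v y)) -> inA (pC c) gram_ellv.
Proof.
move=> cuv; split; first by move=> i j; apply: dotrC.
split; first by move=> x x'; apply: (sum_dotr_ellv (u x) (u x')).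
split; first by move=> x y; apply: (sum_dotr_ellv (u x) (v y)).
split; first by move=> y y'; apply: (sum_dotr_ellv (v y) (v y')).
by move=> a b x y; rewrite (pC_ellv cuv).
Qed.

End LorentzFamily.

Lemma tensmx11 (R : pzRingType) p q :
  (1%:M : 'M[R]_p) *t (1%:M : 'M[R]_q) = 1%:M.
Proof.
apply/matrixP => i j.
case: (mxtens_indexP i) => i1 i2; case: (mxtens_indexP j) => j1 j2.
rewrite tensmxE !mxE (can_eq (@mxtens_indexK _ _)) xpair_eqE.
by case: (i1 == j1); case: (i2 == j2); rewrite ?mulr1n ?mulr0n ?mulr1 ?mulr0.
Qed.

Lemma eigenvalueN (F : fieldType) d (A : 'M[F]_d) (l : F) :
  eigenvalue (- A) l = eigenvalue A (- l).
Proof.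
apply/eigenvalueP/eigenvalueP => -[w wA w0]; exists w => //.
  by rewrite scaleNr -wA mulmxN opprK.
by rewrite mulmxN wA scaleNr opprK.
Qed.

Section ConjugateTranspose.
Variable C : numClosedFieldType.

Lemma trmxC_mul p q r (A : 'M[C]_(p, q)) (B : 'M[C]_(q, r)) :
  (A *m B)^t* = B^t* *m A^t*.
Proof. by rewrite trmx_mul map_mxM. Qed.

Lemma trmxC_tens p q r s (A : 'M[C]_(p, q)) (B : 'M[C]_(r, s)) :
  (A *t B)^t* = A^t* *t B^t*.
Proof. by rewrite trmx_tens map_mxT. Qed.

Lemma mxtrace_conj_unitary p q (X : 'M[C]_(p, q)) (A : 'M[C]_p) :
  X \is unitarymx -> \tr (X^t* *m A *m X) = \tr A.
Proof. by move=> /unitarymxP XX; rewrite mxtrace_mulC mulmxA XX mul1mx. Qed.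

Lemma mxtrace_mean_conj_unitary p q (X Y : 'M[C]_(p, q)) (A : 'M[C]_p) :
  X \is unitarymx -> Y \is unitarymx ->
  \tr (2^-1 *: (X^t* *m A *m X + Y^t* *m A *m Y)) = \tr A.
Proof.
move=> uX uY; rewrite mxtraceZ mxtraceD !mxtrace_conj_unitary //.
by field.
Qed.

Lemma mxtrace_tens_conj p q (X : 'M[C]_(p, q)) (E F : 'M[C]_q)
    (A : 'M[C]_(p * p)) :
  \tr ((E *t F) *m ((X *t X)^t* *m A *m (X *t X))) =
  \tr (((X *m E *m X^t*) *t (X *m F *m X^t*)) *m A).
Proof.
by rewrite mulmxA mxtrace_mulC !mulmxA trmxC_tens !tensmx_mul.
Qed.

Lemma eigenvalue_spectral_diag d (A : 'M[C]_d) (j : 'I_d) :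
  A \is normalmx -> eigenvalue A (spectral_diag A 0 j).
Proof.
move=> /orthomx_spectralP; set P := spectralmx A.
have /unitarymxP PP := spectral_unitarymx A.
rewrite invmx_unitary ?spectral_unitarymx // => eA.
have ejP : row j P *m P^t* = delta_mx 0 j by rewrite -row_mul PP row1.
apply/eigenvalueP; exists (row j P).
  by rewrite {1}eA !mulmxA ejP -rowE row_diag_mx -scalemxAl -rowE.
apply/eqP => Pj0.
move/matrixP/(_ 0 j): ejP.
by rewrite Pj0 mul0mx !mxE !eqxx => /eqP; rewrite eq_sym oner_eq0.
Qed.

End ConjugateTranspose.

Lemma tensmx_unitary (C : numClosedFieldType) p q r s
    (X : 'M[C]_(p, q)) (Y : 'M[C]_(r, s)) :
  X \is unitarymx -> Y \is unitarymx -> X *t Y \is unitarymx.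
Proof.
move=> /unitarymxP XX /unitarymxP YY; apply/unitarymxP.
by rewrite trmxC_tens tensmx_mul XX YY tensmx11.
Qed.

Section BlockDiagonal.
Variables (C : numClosedFieldType) (d : nat).

Definition inlmx : 'M[C]_(d, d + d) := row_mx 1%:M 0.
Definition inrmx : 'M[C]_(d, d + d) := row_mx 0 1%:M.

Lemma trmxC_inlmx : inlmx^t* = col_mx 1%:M 0.
Proof. by rewrite /inlmx tr_row_mx map_col_mx trmx1 trmx0 map_mx1 map_mx0. Qed.

Lemma trmxC_inrmx : inrmx^t* = col_mx 0 1%:M.
Proof. by rewrite /inrmx tr_row_mx map_col_mx trmx1 trmx0 map_mx1 map_mx0. Qed.

Lemma inlmx_block (A B D E : 'M[C]_d) :
  inlmx *m block_mx A B D E *m inlmx^t* = A.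
Proof.
rewrite trmxC_inlmx /inlmx mul_row_block mul_row_col.
by rewrite !mul1mx !mul0mx !mulmx0 !addr0 mulmx1.
Qed.

Lemma inrmx_block (A B D E : 'M[C]_d) :
  inrmx *m block_mx A B D E *m inrmx^t* = E.
Proof.
rewrite trmxC_inrmx /inrmx mul_row_block mul_row_col.
by rewrite !mul1mx !mul0mx !mulmx0 !add0r mulmx1.
Qed.

Lemma inlmx_unitary : inlmx \is unitarymx.
Proof.
by apply/unitarymxP; rewrite trmxC_inlmx /inlmx mul_row_col mul1mx mul0mx addr0.
Qed.

Lemma inrmx_unitary : inrmx \is unitarymx.
Proof.
by apply/unitarymxP; rewrite trmxC_inrmx /inrmx mul_row_col mul1mx mul0mx add0r.
Qed.

Lemma block_diagE (A E : 'M[C]_d) :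
  block_mx A 0 0 E = inlmx^t* *m A *m inlmx + inrmx^t* *m E *m inrmx.
Proof.
rewrite trmxC_inlmx trmxC_inrmx /inlmx /inrmx !mul_col_mx !mul1mx !mul0mx.
rewrite !mul_mx_row !mulmx1 !mulmx0.
by rewrite add_col_mx addr0 add0r block_mxEv.
Qed.

End BlockDiagonal.

Arguments inlmx {C d}.
Arguments inrmx {C d}.
Arguments inlmx_unitary {C d}.
Arguments inrmx_unitary {C d}.

Section PositiveSemidefinite.
Variable R : rcfType.
Local Notation C := R[i].

(* The qualification is needed: [hermitian] alone is the sesquilinear-form
   predicate of MathComp. *)
Lemma hermitian_normal d (A : 'M[C]_d) : Defs.hermitian A -> A \is normalmx.
Proof. by move=> hA; apply/normalmxP; rewrite [A^t*]hA. Qed.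

Lemma psd_conj p q (A : 'M[C]_p) (X : 'M[C]_(p, q)) :
  psd A -> psd (X^t* *m A *m X).
Proof.
move=> [hA A0]; split.
  by rewrite /Defs.hermitian /adjmx !trmxC_mul trmxCK [A^t*]hA mulmxA.
by move=> w; have := A0 (w *m X^t*); rewrite trmxC_mul trmxCK !mulmxA.
Qed.

Lemma psdD d (A B : 'M[C]_d) : psd A -> psd B -> psd (A + B).
Proof.
move=> [hA A0] [hB B0]; split.
  by rewrite /Defs.hermitian /adjmx linearD /= map_mxD [A^t*]hA [B^t*]hB.
by move=> w; rewrite mulmxDr mulmxDl mxE addr_ge0.
Qed.

Lemma psdZ d (r : C) (A : 'M[C]_d) : 0 <= r -> psd A -> psd (r *: A).
Proof.
move=> r0 [hA A0]; split.
  rewrite /Defs.hermitian /adjmx linearZ /= map_mxZ.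
  by congr (_ *: _); [exact: conj_Creal (ger0_real r0) | exact: hA].
by move=> w; rewrite -scalemxAr -scalemxAl mxE mulr_ge0.
Qed.

Lemma psd_diag_mx d (D : 'rV[C]_d) :
  (forall j, 0 <= D 0 j) -> psd (diag_mx D).
Proof.
move=> D0; split.
  rewrite /Defs.hermitian /adjmx tr_diag_mx map_diag_mx; congr diag_mx.
  by apply/rowP => j; rewrite mxE; exact: conj_Creal (ger0_real (D0 j)).
move=> w; rewrite mul_mx_diag mxE; apply: sumr_ge0 => j _; rewrite !mxE.
by rewrite mulrAC mulr_ge0 ?mul_conjC_ge0.
Qed.

Lemma psd_add1mx d (A : 'M[C]_d) :
  Defs.hermitian A -> (forall l, eigenvalue A l -> -1 <= l) -> psd (1%:M + A).
Proof.
move=> hA lA; have nA := hermitian_normal hA.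
have /unitarymxP PP := spectral_unitarymx A.
have PtP : (spectralmx A)^t* *m spectralmx A = 1%:M.
  by rewrite -invmx_unitary ?spectral_unitarymx ?mulVmx ?spectral_unit.
have -> : 1%:M + A = (spectralmx A)^t*
    *m diag_mx (const_mx 1 + spectral_diag A) *m spectralmx A.
  rewrite linearD /= diag_const_mx mulmxDr mulmxDl mulmx1 PtP.
  by rewrite {1}(orthomx_spectralP nA) invmx_unitary ?spectral_unitarymx.
apply/psd_conj/psd_diag_mx => j; rewrite !mxE addrC -lerBlDr sub0r.
exact/lA/eigenvalue_spectral_diag.
Qed.

End PositiveSemidefinite.

Section Effects.
Variables (R : rcfType) (d : nat).
Local Notation C := R[i].
Local Notation sgnC a := (real_complex R (sgnb R a)).
Implicit Types (M N : 'M[C]_d) (a b : bool).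

Definition effect M a : 'M[C]_d := 2^-1 *: (1%:M + sgnC a *: M).

Lemma psd_effect M a : obs_pm1 M -> psd (effect M a).
Proof.
move=> [hM lM]; apply: psdZ; first by rewrite invr_ge0 ler0n.
case: a; rewrite /sgnb ?rmorph1 ?rmorphN1 ?scale1r ?scaleN1r.
  by apply: psd_add1mx => // l /lM /andP[].
apply: psd_add1mx => [|l].
  by rewrite /Defs.hermitian /adjmx linearN /= map_mxN; congr (- _); exact: hM.
by rewrite eigenvalueN => /lM /andP[_]; rewrite lerNl.
Qed.

Lemma add_effect_negb M a : effect M a + effect M (~~ a) = 1%:M.
Proof.
rewrite /effect sgnbN rmorphN scaleNr -scalerDr addrACA subrr addr0.
have half2 : (2^-1 + 2^-1 : C) = 1 by field.
by rewrite scalerDr -scalerDl half2 scale1r.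
Qed.

Lemma tens_effect M N a b :
  effect M a *t effect N b =
  4^-1 *: (1%:M + sgnC b *: (1%:M *t N) + sgnC a *: (M *t 1%:M)
           + (sgnC a * sgnC b) *: (M *t N)).
Proof.
rewrite -[1%:M in RHS](tensmx11 C d d).
by apply/matrixP => i j; rewrite !mxE; field.
Qed.

Lemma mxtrace_tens_effect M N a b (rho : 'M[C]_(d * d)) :
  \tr ((effect M a *t effect N b) *m rho) =
  4^-1 * (\tr rho + sgnC b * \tr ((1%:M *t N) *m rho)
          + sgnC a * \tr ((M *t 1%:M) *m rho)
          + sgnC a * sgnC b * \tr ((M *t N) *m rho)).
Proof.
rewrite tens_effect; move: (1%:M *t N) (M *t 1%:M) (M *t N) => T1 T2 T3.
by rewrite -scalemxAl !mulmxDl -!scalemxAl mul1mx mxtraceZ !mxtraceD !mxtraceZ.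
Qed.

Definition dup_effect M a : 'M[C]_(d + d) :=
  block_mx (effect M a) 0 0 (effect M (~~ a)).

Definition dup_state (rho : 'M[C]_(d * d)) : 'M[C]_((d + d) * (d + d)) :=
  2^-1 *: ((inlmx *t inlmx)^t* *m rho *m (inlmx *t inlmx)
           + (inrmx *t inrmx)^t* *m rho *m (inrmx *t inrmx)).

Lemma psd_dup_effect M a : obs_pm1 M -> psd (dup_effect M a).
Proof.
move=> hM; rewrite /dup_effect block_diagE.
by apply: psdD; apply/psd_conj/psd_effect.
Qed.

Lemma sum_dup_effect M : \sum_a dup_effect M a = 1%:M.
Proof.
rewrite big_bool /= /dup_effect add_block_mx !addr0 [1%:M]scalar_mx_block.
by congr block_mx; apply: add_effect_negb.
Qed.

Lemma density_dup_state rho : density rho -> density (dup_state rho).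
Proof.
move=> [rho0 rho1]; split.
  by apply: psdZ; [rewrite invr_ge0 ler0n | apply: psdD; apply: psd_conj].
by rewrite mxtrace_mean_conj_unitary ?tensmx_unitary ?inlmx_unitary
  ?inrmx_unitary.
Qed.

(* Stated with equations so that it can be applied without unfolding the
   matrix operations while matching. *)
Lemma mxtrace_dup_state (E F : 'M[C]_(d + d)) (A A' B B' : 'M[C]_d) rho :
  inlmx *m E *m inlmx^t* = A -> inlmx *m F *m inlmx^t* = A' ->
  inrmx *m E *m inrmx^t* = B -> inrmx *m F *m inrmx^t* = B' ->
  \tr ((E *t F) *m dup_state rho) =
  2^-1 * (\tr ((A *t A') *m rho) + \tr ((B *t B') *m rho)).
Proof.
move=> <- <- <- <-; rewrite -scalemxAr mxtraceZ mulmxDr mxtraceD.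
by congr (_ * (_ + _)); apply: mxtrace_tens_conj.
Qed.

Lemma mxtrace_dup_effect M N a b rho (r : R) :
  \tr rho = 1 -> \tr ((M *t N) *m rho) = real_complex R r ->
  \tr ((dup_effect M a *t dup_effect N b) *m dup_state rho) =
  real_complex R ((1 + sgnb R a * sgnb R b * r) / 4).
Proof.
move=> rho1 rhoMN.
have marginals_cancel (t1 t2 x y z w : C) : x = 1 -> w = real_complex R r ->
    t1 = 4^-1 * (x + sgnC b * y + sgnC a * z + sgnC a * sgnC b * w) ->
    t2 = 4^-1 * (x + sgnC (~~ b) * y + sgnC (~~ a) * z
                 + sgnC (~~ a) * sgnC (~~ b) * w) ->
    2^-1 * (t1 + t2) = real_complex R ((1 + sgnb R a * sgnb R b * r) / 4).
  move=> -> -> -> ->; rewrite !sgnbN !rmorphN !rmorphM rmorphD rmorph1.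
  by rewrite fmorphV rmorph_nat; field.
rewrite (mxtrace_dup_state _ (inlmx_block _ _ _ _) (inlmx_block _ _ _ _)
  (inrmx_block _ _ _ _) (inrmx_block _ _ _ _)).
by apply: (marginals_cancel _ _ _ (\tr ((1%:M *t N) *m rho))
  (\tr ((M *t 1%:M) *m rho)) _ rho1 rhoMN); apply: mxtrace_tens_effect.
Qed.

End Effects.

Lemma Cor_quantum_pC (R : rcfType) n m (c : 'M[R]_(n, m)) :
  Cor c -> quantum (pC c).
Proof.
case=> _ [d [M [N [rho [d_gt0 [hM [hN [rho_dens Mrho]]]]]]]].
exists (d + d)%N, (fun x => dup_effect (M x)), (fun y => dup_effect (N y)).
exists (dup_state rho); split; first by rewrite addn_gt0 d_gt0.
split; first exact: density_dup_state.
split; first by move=> x a; apply: psd_dup_effect.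
split; first by move=> x; apply: sum_dup_effect.
split; first by move=> y b; apply: psd_dup_effect.
split; first by move=> y; apply: sum_dup_effect.
have [_ rho1] := rho_dens.
by move=> a b x y; rewrite (mxtrace_dup_effect a b rho1 (esym (Mrho x y))).
Qed.

Theorem lemma5p7 (R : rcfType) (n m : nat) (c : 'M[R]_(n, m))
  (hC : Cor c)
  (u : 'I_n -> 'rV[R]_(n + m)) (v : 'I_m -> 'rV[R]_(n + m))
  (hu : forall x, dotr (u x) (u x) = 1)
  (hv : forall y, dotr (v y) (v y) = 1)
  (huv : forall x y, c x y = dotr (u x) (v y)) :
  (forall (a b : bool) (x : 'I_n) (y : 'I_m),
      pC c a b x y = dotr (ellv (u x) a) (ellv (v y) b)) /\
  gram_lorentz_behavior (pC c).
Proof.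
split; first exact: pC_ellv.
split; first exact: Cor_quantum_pC.
exists (gram_ellv u v); split; first exact: inA_gram_ellv.
exact: gram_lorentz_ellv.
Qed.
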